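(* For every constant $c>0$ there is a constant $C>0$ such that for all integers $d,k,t$ with $1\le k\le c\sqrt{d}$, $2k\le d$, and $0\le t\le k-1$, \[ \|\mathcal{D}_t\|_1\le C\binom{d-k}{k-t}\binom{d}{t}2^{k-t}, \] where $\mathcal{D}_t$ is the $\binom{[d]}{k}\times\binom{[d]}{k}$ matrix with $\mathcal{D}_t(A,B)=1$ if $|A\cap B|=t$ and $0$ otherwise.
   Context: $\binom{[d]}{k}$ denotes the set of $k$-element subsets of $[d]=\{1,\dots,d\}$; $\mathcal{D}_t$ is the adjacency matrix of the generalized Johnson graph. $\|\cdot\|_1$ is the trace norm (sum of absolute values of eigenvalues for this symmetric matrix). *)

From HB Require Import structures.
From mathcomp Require Import all_boot all_order all_algebra all_field.
Set Implicit Arguments. Unset Strict Implicit. Unset Printing Implicit Defensive.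
Import Order.TTheory GRing.Theory Num.Theory.
Local Open Scope ring_scope.

Definition kset (d k : nat) : {set {set 'I_d}} := [set A : {set 'I_d} | #|A| == k].

Definition Dt (d k t : nat) : 'M[algC]_#|kset d k| :=
  \matrix_(i, j) ((#|(enum_val i : {set 'I_d}) :&: enum_val j| == t)%:R).

Definition root_seq (p : {poly algC}) : seq algC := sval (closed_field_poly_normal p).

Definition eigvals n (M : 'M[algC]_n) : seq algC := root_seq (char_poly M).

(* Trace norm of a symmetric matrix: sum of absolute values of eigenvalues. *)
Definition trace_norm n (M : 'M[algC]_n) : algC := \sum_(z <- eigvals M) `|z|.

From mathcomp Require Import all_boot all_order all_algebra all_field.
From mathcomp Require Import sesquilinear spectral ring zify.
Set Implicit Arguments.
Unset Strict Implicit.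
Unset Printing Implicit Defensive.
Import Order.TTheory GRing.Theory Num.Theory.
Local Open Scope ring_scope.

(* D_t is Hermitian, and inclusion-exclusion over the common subsets T of two
   k-sets writes it as sum_T (-1)^(|T|-t) C(|T|,t) u_T^* u_T, where u_T is the
   indicator row of the k-sets containing T.  For a normal matrix such a
   combination of rank-one matrices has trace norm at most
   sum_T |coefficient| * |u_T|^2, which here equals
   C(d,k) C(k,t) 2^(k-t) = C(d,t) C(d-t,k-t) 2^(k-t).  It remains to compare
   C(n+p,p) with C(n,p) for n = d-k, p = k-t <= k and k^2 <= K d, K > c^2:
   by Vandermonde, C(n+p,p) = sum_j C(p,j) C(n,p-j), and once n >= 3k the
   j-th term is at most (4K)^(4K) 2^-j C(n,p); for n < 3k, k < 4K and the
   crude bound 2^(n+p) suffices. *)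

Section BinomialFacts.
Local Open Scope nat_scope.

Lemma ffactnD n a b : n ^_ (a + b) = n ^_ a * (n - a) ^_ b.
Proof.
elim: b => [|b IH]; first by rewrite addn0 muln1.
by rewrite addnS !ffactnSr IH subnDA mulnA.
Qed.

Lemma mul_bin_sub m s t : t <= s ->
  'C(m, s) * 'C(s, t) = 'C(m, t) * 'C(m - t, s - t).
Proof.
move=> le_ts; apply/eqP; rewrite -(eqn_pmul2r (fact_gt0 t)).
rewrite -(eqn_pmul2r (fact_gt0 (s - t))); apply/eqP.
transitivity ('C(m, s) * ('C(s, t) * (t`! * (s - t)`!))); first by ring.
rewrite bin_fact // bin_ffact -{1}(subnKC le_ts) ffactnD -!bin_ffact; ring.
Qed.

Lemma leq_bin_exp2 n m : 'C(n, m) <= 2 ^ n.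
Proof.
elim: n m => [|n IH] [|m] //=; first by rewrite bin0 expn_gt0.
by rewrite binS expnS mul2n -addnn leq_add.
Qed.

Lemma leq_sum_exp2_rev p : \sum_(j < p.+1) 2 ^ (p - j) <= 2 ^ p.+1.
Proof.
rewrite (reindex_inj rev_ord_inj) /=.
rewrite (eq_bigr (fun j : 'I_p.+1 => 2 ^ j)) => [|j _]; last first.
  by rewrite subSS subKn ?leq_ord.
by have := predn_exp 2 p.+1; rewrite mul1n => <-; apply: leq_pred.
Qed.

Lemma leq_bin_fact_exp p j : 'C(p, j) * j`! <= p ^ j.
Proof.
rewrite bin_ffact; elim: j => [//|j IH].
by rewrite ffactnSr expnSr leq_mul // leq_subr.
Qed.

Lemma leq_exp_fact y j : y ^ j <= y ^ y * j`!.
Proof.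
elim: j => [|j IH]; first by rewrite muln1 expn_gt0; case: y.
have [le_yj | lt_jy] := leqP y j.
  by rewrite expnS factS mulnCA leq_mul // leqW.
apply: leq_trans (leq_pmulr _ (fact_gt0 _)).
by case: y lt_jy {IH} => [//|y] lt_jy; apply: leq_pexp2l.
Qed.

(* By [mul_bin_left], passing from p - j to p - j.+1 trades a factor
   p - j <= p for a factor n - p + j.+1 >= n - p + 1. *)
Lemma leq_bin_sub n p j : j <= p -> p <= n ->
  'C(n, p - j) * (n - p + 1) ^ j <= 'C(n, p) * p ^ j.
Proof.
move=> + le_pn; elim: j => [|j IH] lt_jp; first by rewrite !subn0.
have shift : (p - j) * 'C(n, p - j) = (n - (p - j.+1)) * 'C(n, p - j.+1).
  by rewrite -mul_bin_left; congr (_ * 'C(n, _)); lia.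
rewrite expnS mulnCA.
apply: (@leq_trans ((n - (p - j.+1)) * ('C(n, p - j.+1) * (n - p + 1) ^ j))).
  by rewrite leq_mul2r; apply/orP; right; lia.
rewrite mulnA -shift -mulnA expnS [leqRHS]mulnCA.
by rewrite leq_mul ?leq_subr // IH // ltnW.
Qed.

Lemma leq_vandermonde_term L n p j : j <= p -> p <= n ->
    p * p <= L * (n - p + 1) ->
  'C(p, j) * 'C(n, p - j) * 2 ^ j <= (2 * L) ^ (2 * L) * 'C(n, p).
Proof.
move=> le_jp le_pn ppL; set q := n - p + 1.
have q_gt0 : 0 < q ^ j by rewrite expn_gt0 /q addn1.
have cancel_q : 'C(p, j) * 'C(n, p - j) * j`! <= 'C(n, p) * L ^ j.
  rewrite -(leq_pmul2r q_gt0).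
  have -> : 'C(p, j) * 'C(n, p - j) * j`! * q ^ j
            = 'C(p, j) * j`! * ('C(n, p - j) * q ^ j) by ring.
  apply: (@leq_trans (p ^ j * ('C(n, p) * p ^ j))).
    exact: leq_mul (leq_bin_fact_exp p j) (leq_bin_sub le_jp le_pn).
  rewrite mulnCA -mulnA -!expnMn leq_mul2l; apply/orP; right.
  by case: j {le_jp q_gt0} => [//|j]; rewrite leq_exp2r.
rewrite -(leq_pmul2r (fact_gt0 j)).
apply: (@leq_trans ('C(n, p) * (2 * L) ^ j)).
  by rewrite mulnAC expnMn mulnCA [2 ^ j * _]mulnC leq_mul2r cancel_q orbT.
by rewrite [leqLHS]mulnC mulnAC leq_mul2r leq_exp_fact orbT.
Qed.

Definition bin_addn_bound K := 2 * (4 * K) ^ (4 * K) + 2 ^ (16 * K).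

Lemma leq_bin_addn K n p k : p <= k -> k <= n -> k * k <= K * (n + k) ->
  'C(n + p, p) <= bin_addn_bound K * 'C(n, p).
Proof.
move=> le_pk le_kn kkK.
have [le_3k_n | lt_n_3k] := leqP (3 * k) n; last first.
  have lt_k_4K : k < 4 * K by nia.
  apply: leq_trans (leq_bin_exp2 _ _) _.
  apply: (@leq_trans (2 ^ (16 * K))); first by apply: leq_pexp2l => //; lia.
  rewrite /bin_addn_bound mulnDl; apply: leq_trans (leq_addl _ _).
  by rewrite leq_pmulr // bin_gt0 (leq_trans le_pk le_kn).
set Y := (4 * K) ^ (4 * K).
have ppL : p * p <= 2 * K * (n - p + 1) by nia.
have term j : j <= p ->
    2 ^ p * ('C(p, j) * 'C(n, p - j)) <= Y * 'C(n, p) * 2 ^ (p - j).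
  move=> le_jp; rewrite -{1}(subnKC le_jp) expnD.
  rewrite [leqLHS](_ : _ = 'C(p, j) * 'C(n, p - j) * 2 ^ j * 2 ^ (p - j)); last by ring.
  rewrite leq_mul2r /Y (_ : 4 * K = 2 * (2 * K)); last by rewrite mulnA.
  by apply/orP; right; apply: leq_vandermonde_term le_jp (leq_trans le_pk le_kn) ppL.
apply: (@leq_trans (2 * Y * 'C(n, p))); last by rewrite leq_mul2r leq_addr orbT.
rewrite -(leq_pmul2l (expn_gt0 2 p)) addnC -binomial.Vandermonde big_distrr /=.
apply: (@leq_trans (\sum_(j < p.+1) Y * 'C(n, p) * 2 ^ (p - j))).
  by apply: leq_sum => j _; apply: term; rewrite -ltnS.
rewrite -big_distrr /= [leqRHS](_ : _ = Y * 'C(n, p) * 2 ^ p.+1).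
  by rewrite leq_mul2l leq_sum_exp2_rev orbT.
by rewrite expnS; ring.
Qed.

End BinomialFacts.

Lemma sum_subset_card (R : nmodType) (T : finType) (X : {set T}) (f : nat -> R) :
  \sum_(Y : {set T} | Y \subset X) f #|Y| = \sum_(s < #|X|.+1) f s *+ 'C(#|X|, s).
Proof.
rewrite (partition_big (fun Y : {set T} => inord #|Y| : 'I_#|X|.+1) xpredT) //=.
apply: eq_bigr => s _.
have cardY (Y : {set T}) : Y \subset X -> (inord #|Y| == s :> 'I__) = (#|Y| == s).
  by move=> sYX; rewrite -val_eqE /= inordK // ltnS subset_leq_card.
rewrite (eq_bigr (fun _ => f s)) => [|Y /andP[sYX]]; last by rewrite cardY // => /eqP->.
rewrite sumr_const -cards_draws; congr (_ *+ _); apply: eq_card => Y.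
by rewrite !inE unfold_in /=; case sYX: (Y \subset X); rewrite //= cardY.
Qed.

Lemma sum_bin_sub (R : nmodType) m t (g : nat -> R) : (t <= m)%N ->
  \sum_(s < m.+1) g (s - t)%N *+ ('C(m, s) * 'C(s, t))%N
  = (\sum_(j < (m - t).+1) g j *+ 'C(m - t, j)) *+ 'C(m, t).
Proof.
move=> le_tm.
rewrite -(big_mkord xpredT (fun s => g (s - t)%N *+ ('C(m, s) * 'C(s, t))%N)).
rewrite (big_cat_nat (leq0n t) (leqW le_tm)) /= big_nat big1 => [|s /andP[_ lt_st]].
  rewrite add0r -{1}(add0n t) big_addn subSn // big_mkord -sumrMnl.
  by apply: eq_bigr => j _; rewrite addnK mul_bin_sub ?leq_addl // addnK mulnC mulrnA.
by rewrite (bin_small lt_st) muln0.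
Qed.

Lemma sum_subset_bin (R : comPzRingType) (T : finType) (X : {set T}) t (x : R) :
  \sum_(Y : {set T} | Y \subset X) x ^+ (#|Y| - t) *+ 'C(#|Y|, t)
  = (x + 1) ^+ (#|X| - t) *+ 'C(#|X|, t).
Proof.
rewrite (sum_subset_card X (fun s => x ^+ (s - t) *+ 'C(s, t))).
have [le_tX | lt_Xt] := leqP t #|X|.
  under eq_bigr do rewrite -mulrnA mulnC.
  by rewrite (sum_bin_sub (fun j => x ^+ j)) // exprD1n.
rewrite bin_small // mulr0n big1 // => s _.
by rewrite (@bin_small s t) ?mul0rn // (leq_ltn_trans _ lt_Xt) // -ltnS.
Qed.

Lemma sum_subset_alt_bin (R : comPzRingType) (T : finType) (X : {set T}) t :
  \sum_(Y : {set T} | Y \subset X) (-1) ^+ (#|Y| - t) *+ 'C(#|Y|, t) = (#|X| == t)%:R :> R.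
Proof.
rewrite sum_subset_bin addNr expr0n subn_eq0.
by case: ltngtP => [lt_Xt | _ | ->]; rewrite ?(bin_small lt_Xt) ?mul0rn ?binn.
Qed.

Lemma char_poly_conj (R : comUnitRingType) n (P A : 'M[R]_n) :
  P \in unitmx -> char_poly (invmx P *m A *m P) = char_poly A.
Proof.
move=> Pu; rewrite /char_poly /char_poly_mx.
have PV1 : map_mx polyC (invmx P) *m map_mx polyC P = 1%:M.
  by rewrite -map_mxM mulVmx // map_mx1.
have -> : 'X%:M - map_mx polyC (invmx P *m A *m P)
          = map_mx polyC (invmx P) *m ('X%:M - map_mx polyC A) *m map_mx polyC P.
  by rewrite !map_mxM mulmxBr mulmxBl mul_mx_scalar -scalemxAl PV1 scalemx1.
by rewrite !det_mulmx mulrAC -det_mulmx PV1 det1 mul1r.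
Qed.

Section TraceNorm.
Local Open Scope sesquilinear_scope.
Variable n : nat.
Implicit Types (A : 'M[algC]_n) (v : 'rV[algC]_n).

Lemma eigvals_normal A : A \is normalmx ->
  perm_eq (eigvals A) [seq spectral_diag A 0 i | i <- enum 'I_n].
Proof.
move=> /orthomx_spectralP An.
have cpA : char_poly A = \prod_(i < n) ('X - (spectral_diag A 0 i)%:P).
  rewrite {1}An char_poly_conj ?spectral_unit // char_poly_trig ?diag_mx_is_trig //.
  by apply: eq_bigr => i _; rewrite mxE eqxx mulr1n.
apply: prod_XsubC_eq; rewrite big_map big_enum /= -cpA /eigvals /root_seq.
case: closed_field_poly_normal => r /= hr.
by rewrite [in RHS]hr (monicP (char_poly_monic A)) scale1r.
Qed.

Lemma trace_norm_normal A : A \is normalmx ->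
  trace_norm A = \sum_i `|spectral_diag A 0 i|.
Proof.
by move=> An; rewrite /trace_norm (perm_big _ (eigvals_normal An)) big_map big_enum.
Qed.

Lemma conj_rank1_mx_diag (P : 'M[algC]_n) v i :
  (P *m (v^t* *m v) *m P^t*) i i = `|(v *m P^t*) 0 i| ^+ 2.
Proof.
have -> : P *m (v^t* *m v) *m P^t* = (v *m P^t*)^t* *m (v *m P^t*).
  by rewrite trmx_mul map_mxM trmxCK !mulmxA.
by move: (v *m P^t*) => u; rewrite mxE big_ord1 !mxE normCK mulrC.
Qed.

Lemma trace_norm_le_sum_rank1 (I : finType) (w : I -> algC) (v : I -> 'rV_n) A :
  A \is normalmx -> A = \sum_r w r *: ((v r)^t* *m v r) ->
  trace_norm A <= \sum_r `|w r| * (v r *m (v r)^t*) 0 0.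
Proof.
move=> An Adef; set P := spectralmx A.
have [PtP PPt] : P^t* *m P = 1%:M /\ P *m P^t* = 1%:M.
  split; last exact/unitarymxP/spectral_unitarymx.
  by rewrite -invmx_unitary ?spectral_unitarymx // mulVmx ?spectral_unit.
have diagA : diag_mx (spectral_diag A) = P *m A *m P^t*.
  move/orthomx_spectralP: (An) => {2}->.
  by rewrite invmx_unitary ?spectral_unitarymx // !mulmxA PPt mul1mx -mulmxA PPt mulmx1.
have normv r : \sum_i `|(v r *m P^t*) 0 i| ^+ 2 = (v r *m (v r)^t*) 0 0.
  have -> : v r *m (v r)^t* = (v r *m P^t*) *m (v r *m P^t*)^t*.
    by rewrite trmx_mul map_mxM trmxCK mulmxA -(mulmxA (v r)) PtP mulmx1.
  by move: (v r *m P^t*) => u; rewrite mxE; apply: eq_bigr => i _; rewrite !mxE normCK.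
have diagE i : spectral_diag A 0 i = \sum_r w r * `|(v r *m P^t*) 0 i| ^+ 2.
  have /matrixP/(_ i i) := diagA; rewrite mxE eqxx mulr1n => ->.
  rewrite [in LHS]Adef mulmx_sumr mulmx_suml summxE.
  by apply: eq_bigr => r _; rewrite -scalemxAr -scalemxAl mxE conj_rank1_mx_diag.
rewrite trace_norm_normal //.
under eq_bigr => i _ do rewrite diagE.
apply: le_trans; first by apply: ler_sum => i _; apply: ler_norm_sum.
rewrite exchange_big /=; apply: ler_sum => r _.
by rewrite -normv mulr_sumr; apply: ler_sum => i _; rewrite normrM normrX normr_id.
Qed.

End TraceNorm.

Section JohnsonMatrix.
Local Open Scope sesquilinear_scope.
Variables d k t : nat.

Definition containing_row (T : {set 'I_d}) : 'rV[algC]_#|kset d k| :=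
  \row_i (T \subset (enum_val i : {set 'I_d}))%:R.

Lemma Dt_normal : Dt d k t \is normalmx.
Proof.
apply/hermitian_normalmx/is_hermitianmxP.
by apply/matrixP => i j; rewrite expr0 scale1r !mxE conjC_nat setIC.
Qed.

(* Inclusion-exclusion over the subsets T of A :&: B. *)
Lemma Dt_rank1_decomp :
  Dt d k t = \sum_(T : {set 'I_d})
    ((-1) ^+ (#|T| - t) *+ 'C(#|T|, t)) *: ((containing_row T)^t* *m containing_row T).
Proof.
apply/matrixP => i j; rewrite summxE !mxE -sum_subset_alt_bin big_mkcond /=.
apply: eq_bigr => T _; rewrite !mxE big_ord1 !mxE conjC_nat -natrM mulnb -subsetI.
by case: ifP; rewrite ?mulr1 ?mulr0.
Qed.

Lemma trace_norm_Dt_le : (t <= k)%N ->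
  trace_norm (Dt d k t) <= ('C(d, k) * 'C(k, t) * 2 ^ (k - t))%:R.
Proof.
move=> le_tk.
apply: le_trans (trace_norm_le_sum_rank1 Dt_normal Dt_rank1_decomp) _.
rewrite le_eqVlt; apply/predU1l.
transitivity (\sum_(T : {set 'I_d}) \sum_(i < #|kset d k|)
                (T \subset (enum_val i : {set 'I_d}))%:R *+ 'C(#|T|, t) : algC).
  apply: eq_bigr => T _; rewrite normrMn normrX normrN1 expr1n mxE mulr_sumr.
  by apply: eq_bigr => i _; rewrite !mxE conjC_nat -natrM mulnb andbb mulr_natl.
rewrite exchange_big /=.
transitivity (\sum_(i < #|kset d k|) ('C(k, t) * 2 ^ (k - t))%:R : algC).
  apply: eq_bigr => i _; have /[!inE] /eqP cardA := enum_valP i.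
  rewrite [RHS](_ : _ = (1 + 1 : algC) ^+ (k - t) *+ 'C(k, t)); last first.
    by rewrite natrM natrX mulr_natl.
  have := sum_subset_bin (enum_val i : {set 'I_d}) t (1 : algC); rewrite cardA => <-.
  rewrite [RHS]big_mkcond /=; apply: eq_bigr => Y _.
  by case: (Y \subset _); rewrite ?expr1n ?mul0rn.
by rewrite sumr_const card_ord /kset card_draws card_ord -mulr_natr !natrM; ring.
Qed.

End JohnsonMatrix.

Theorem fact3 :
  forall c : algC, 0 < c ->
  exists C : algC, 0 < C /\
    forall d k t : nat,
      (1 <= k)%N -> k%:R <= c * sqrtC d%:R -> (2 * k <= d)%N -> (t <= k - 1)%N ->
      trace_norm (Dt d k t) <= C * ('C(d - k, k - t) * 'C(d, t) * 2 ^ (k - t))%:R.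
Proof.
move=> c c_gt0; set K := Num.Def.archi_bound (c ^+ 2).
have cK : c ^+ 2 < K%:R by apply: archi_boundP; rewrite exprn_ge0 // ltW.
exists (bin_addn_bound K)%:R; split.
  by rewrite ltr0n /bin_addn_bound addn_gt0 expn_gt0 orbT.
move=> d k t _ k_le_sqrt le_2k_d le_t_k1.
have le_tk : (t <= k)%N by lia.
have kkK : (k * k <= K * d)%N.
  rewrite -(ler_nat algC) !natrM.
  apply: le_trans (_ : (c * sqrtC d%:R) ^+ 2 <= _).
    by rewrite expr2 ler_pM.
  by rewrite exprMn sqrtCK ler_wpM2r // ltW.
apply: le_trans (trace_norm_Dt_le d le_tk) _.
rewrite -natrM ler_nat mul_bin_sub //.
rewrite [leqRHS](_ : _ = 'C(d, t) * (bin_addn_bound K * 'C(d - k, k - t)) * 2 ^ (k - t))%N;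
  last by ring.
rewrite leq_mul2r; apply/orP; right; rewrite leq_mul2l; apply/orP; right.
have -> : (d - t = (d - k) + (k - t))%N by lia.
by apply: leq_bin_addn (leq_subr t k) _ _; [lia | rewrite subnK //; lia].
Qed.
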